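(* For $k\ge1$ and $g\in\mathbb C[x_1^{\pm1},\dots,x_k^{\pm1}]^{S(k)}$ put $\widetilde E_k(g)=q_3^{\frac{k-k^2}2}(q_1^{-1}-1)^k\frac{\prod_{1\le r\ne s\le k}(x_r-q_1^{-1}x_s)\,g(x_1,\dots,x_k)}{\prod_{1\le r\ne s\le k}(x_r-x_s)}$ and $\widetilde F_k(g)=(q_2/q_1)^{\frac{k-k^2}2}(1-q_1)^k\frac{\prod_{1\le r\ne s\le k}(x_r-q_1^{-1}x_s)\,g(x_1,\dots,x_k)}{\prod_{1\le r\ne s\le k}(x_r-x_s)}$. Then (a) $\Phi^>(\widetilde E_k(g))=\sum_{J\subset\{1,\dots,a\},|J|=k}\Big\{\prod_{r\in J}^{s\notin J}\frac{w_r-q_2^{-1}w_s}{w_r-w_s}\prod_{r\in J}Z(w_r)\cdot g(\{w_r\}_{r\in J})\prod_{r\in J}D_r^{-1}\Big\}$; (b) $\Phi^<(\widetilde F_k(g))=\sum_{J\subset\{1,\dots,a\},|J|=k}\Big\{\prod_{r\in J}^{s\notin J}\frac{w_r-q_2w_s}{w_r-w_s}\cdot g(\{q_1w_r\}_{r\in J})\prod_{r\in J}D_r\Big\}$.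
   Context: Fix $q_1,q_2,q_3\in\mathbb C^\times$, not roots of unity, with $q_1q_2q_3=1$, and square roots $q_1^{1/2},q_2^{1/2}$. Fix $a\ge1$, $N\ge0$, $(z_1,\dots,z_N)\in(\mathbb C^\times)^N$, $Z(z)=\prod_{k=1}^N(1-z_k/z)$. $\widetilde{\mathcal A}^{q_1}$ is the $\mathbb C$-algebra generated by $D_r^{\pm1},w_r^{\pm1}$ ($1\le r\le a$), all commuting except $D_rw_s=q_1^{\delta_{rs}}w_sD_r$, localized at $w_r-q_1^mw_s$ ($r\ne s$, $m\in\mathbb Z$). Let $Y_r(z)=\frac{-1}{1-q_1^{-1}}Z(z)\prod_{s\ne r}\frac{z-w_sq_2^{-1}}{z-w_s}$, $Y'_r(z)=\frac{1}{1-q_1}\prod_{s\ne r}\frac{zq_1^{-1}-w_sq_2}{zq_1^{-1}-w_s}$, $\zeta(z/w)=\frac{\prod_{i=1}^3(z-q_i^{-1}w)}{(z-w)^3}$, $\varphi(z/w)=\frac{(q_1^{1/2}z-q_1^{-1/2}w)(q_2^{1/2}z-q_2^{-1/2}w)}{(z-w)^2}$. $\mathbb S=\bigoplus_k\mathbb S_k$ with $\mathbb S_k$ the space of $f/\prod_{r\ne s}(x_r-x_s)$, $f$ a symmetric Laurent polynomial over $\mathbb C$ in $x_1,\dots,x_k$, with the shuffle product $F\star G=\frac{1}{k!\ell!}\mathrm{Sym}(F(x_1..x_k)G(x_{k+1}..x_{k+\ell})\prod_{r\le k<r'}\zeta(x_r/x_{r'}))$; $\mathbb S^{\mathrm{op}}$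 has opposite product. The maps $\Phi^>:\mathbb S\to\widetilde{\mathcal A}^{q_1}$, $\Phi^<:\mathbb S^{\mathrm{op}}\to\widetilde{\mathcal A}^{q_1}$ are defined on degree $k$ by $\Phi^>(E)=\sum_{m_1+\dots+m_a=k}\{\prod_{r}\prod_{p\le m_r}Y_r(w_rq_1^{-(p-1)})\cdot E(\{w_rq_1^{-(p-1)}\}_{r}^{p\le m_r})\prod_r\prod_{p_1<p_2\le m_r}\zeta^{-1}(\frac{w_rq_1^{-(p_1-1)}}{w_rq_1^{-(p_2-1)}})\prod_{r_1\ne r_2}\prod_{p_1\le m_{r_1},p_2\le m_{r_2}}\varphi^{-1}(\frac{w_{r_1}q_1^{-(p_1-1)}}{w_{r_2}q_1^{-(p_2-1)}})\prod_rD_r^{-m_r}\}$, $\Phi^<(F)=\sum_{m_1+\dots+m_a=k}\{\prod_{r}\prod_{p\le m_r}Y'_r(w_rq_1^{p})\cdot F(\{w_rq_1^{p}\}_{r}^{p\le m_r})\prod_r\prod_{p_1<p_2\le m_r}\zeta^{-1}(\frac{w_rq_1^{p_2}}{w_rq_1^{p_1}})\prod_{r_1\ne r_2}\prod_{p_1,p_2}\varphi^{-1}(\frac{w_{r_2}q_1^{p_2}}{w_{r_1}q_1^{p_1}})\prod_rD_r^{m_r}\}$, with $m_r\in\mathbb N$, $\zeta^{-1}=1/\zeta$, $\varphi^{-1}=1/\varphi$. *)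

From HB Require Import structures.
From mathcomp Require Import all_boot all_order all_algebra fraction.
From mathcomp Require Import complex.
From mathcomp Require Import Rstruct.
From mathcomp Require Export mpoly.
Set Implicit Arguments. Unset Strict Implicit. Unset Printing Implicit Defensive.
Import GRing.Theory Num.Theory.
Local Open Scope ring_scope.

Definition CC : numClosedFieldType := Rdefinitions.R[i].

Section Lemma37Defs.
Variables (a N : nat) (zs : 'I_N -> CC) (q1 q2 q3 sq1 sq2 : CC).

(* Coefficients (in w) of elements of the quantum torus \tilde A^{q1}
   live in (the localization C[w^{+-1}]_loc of C[w] contained in) K. *)
Definition Kf := {fraction {mpoly CC[a]}}.
Definition cK (c : CC) : Kf := tofrac (c%:MP).
Definition wK (r : 'I_a) : Kf := tofrac 'X_r.

(* Elements of \tilde A^{q1} in normal-ordered form  sum_e f_e(w) D^e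
   (all w's to the left of all D's; D^e = prod_r D_r^(e r), e : Z^a) are
   represented by their coefficient function  e |-> f_e. Since the monomials
   D^e form a basis of \tilde A^{q1} as a left module over its subalgebra of
   rational functions in w, two elements are equal iff these coefficient
   functions agree. *)
Definition Atil := {ffun 'I_a -> int} -> Kf.

Definition Zf (x : Kf) : Kf := \prod_(j < N) (1 - cK (zs j) / x).

Definition Yf (r : 'I_a) (x : Kf) : Kf :=
  cK (-1 / (1 - q1^-1)) * Zf x *
  \prod_(s < a | s != r) ((x - wK s * cK q2^-1) / (x - wK s)).
Definition Ypf (r : 'I_a) (x : Kf) : Kf :=
  cK (1 / (1 - q1)) *
  \prod_(s < a | s != r) ((x * cK q1^-1 - wK s * cK q2) / (x * cK q1^-1 - wK s)).

(* zeta(x) = prod_i (x - q_i^{-1}) / (x - 1)^3,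
   phi(x) = (q1^{1/2} x - q1^{-1/2})(q2^{1/2} x - q2^{-1/2}) / (x - 1)^2
   (the dehomogenized versions of zeta(z/w), phi(z/w)). *)
Definition zetaf (x : Kf) : Kf :=
  (x - cK q1^-1) * (x - cK q2^-1) * (x - cK q3^-1) / (x - 1) ^+ 3.
Definition phif (x : Kf) : Kf :=
  (cK sq1 * x - cK sq1^-1) * (cK sq2 * x - cK sq2^-1) / (x - 1) ^+ 2.

Definition ptsG (m : 'I_a -> nat) : seq Kf :=
  flatten [seq [seq wK r * cK (q1 ^- p) | p <- iota 0 (m r)] | r <- enum 'I_a].
Definition ptsL (m : 'I_a -> nat) : seq Kf :=
  flatten [seq [seq wK r * cK (q1 ^+ p) | p <- iota 1 (m r)] | r <- enum 'I_a].

(* A degree-k element of the shuffle algebra is given through its values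
   E : ('I_k -> K) -> K (a rational function of x_1..x_k evaluated at points
   of K). Coefficient of prod_r D_r^{-m_r} in Phi^>(E).
   (Indices p in 'I_(m r) correspond to p+1 in the paper.) *)
Definition coefG (k : nat) (E : ('I_k -> Kf) -> Kf) (m : 'I_a -> nat) : Kf :=
  (\prod_(r < a) \prod_(p < m r) Yf r (wK r * cK (q1 ^- p))) *
  E (fun i => nth 0 (ptsG m) i) *
  (\prod_(r < a) \prod_(p1 < m r) \prod_(p2 < m r | (p1 < p2)%N)
      (zetaf ((wK r * cK (q1 ^- p1)) / (wK r * cK (q1 ^- p2))))^-1) *
  (\prod_(r1 < a) \prod_(r2 < a | r1 != r2)
     \prod_(p1 < m r1) \prod_(p2 < m r2)
      (phif ((wK r1 * cK (q1 ^- p1)) / (wK r2 * cK (q1 ^- p2))))^-1).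

Definition coefL (k : nat) (F : ('I_k -> Kf) -> Kf) (m : 'I_a -> nat) : Kf :=
  (\prod_(r < a) \prod_(p < m r) Ypf r (wK r * cK (q1 ^+ p.+1))) *
  F (fun i => nth 0 (ptsL m) i) *
  (\prod_(r < a) \prod_(p1 < m r) \prod_(p2 < m r | (p1 < p2)%N)
      (zetaf ((wK r * cK (q1 ^+ p2.+1)) / (wK r * cK (q1 ^+ p1.+1))))^-1) *
  (\prod_(r1 < a) \prod_(r2 < a | r1 != r2)
     \prod_(p1 < m r1) \prod_(p2 < m r2)
      (phif ((wK r2 * cK (q1 ^+ p2.+1)) / (wK r1 * cK (q1 ^+ p1.+1))))^-1).

Definition Phi_gt (k : nat) (E : ('I_k -> Kf) -> Kf) : Atil :=
  fun e => \sum_(m : {ffun 'I_a -> 'I_k.+1} | (\sum_(r < a) (m r : nat) == k)%N)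
     (if e == [ffun r => - ((m r : nat)%:Z)] then coefG E (fun r => m r) else 0).

Definition Phi_lt (k : nat) (F : ('I_k -> Kf) -> Kf) : Atil :=
  fun e => \sum_(m : {ffun 'I_a -> 'I_k.+1} | (\sum_(r < a) (m r : nat) == k)%N)
     (if e == [ffun r => (m r : nat)%:Z] then coefL F (fun r => m r) else 0).

(* A symmetric Laurent polynomial g in k variables is given as
   g = P / (x_1 ... x_k)^n with P a symmetric polynomial; its value at
   a point x of K^k. *)
Definition gval (k : nat) (P : {mpoly CC[k]}) (n : nat) (x : 'I_k -> Kf) : Kf :=
  mmap cK x P / (\prod_(i < k) x i) ^+ n.

Definition Etil (k : nat) (P : {mpoly CC[k]}) (n : nat) (x : 'I_k -> Kf) : Kf :=
  cK ((q3 ^+ 'C(k, 2))^-1 * (q1^-1 - 1) ^+ k) *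
  (\prod_(r < k) \prod_(s < k | r != s) (x r - cK q1^-1 * x s)) * gval P n x /
  (\prod_(r < k) \prod_(s < k | r != s) (x r - x s)).
Definition Ftil (k : nat) (P : {mpoly CC[k]}) (n : nat) (x : 'I_k -> Kf) : Kf :=
  cK (((q2 / q1) ^+ 'C(k, 2))^-1 * (1 - q1) ^+ k) *
  (\prod_(r < k) \prod_(s < k | r != s) (x r - cK q1^-1 * x s)) * gval P n x /
  (\prod_(r < k) \prod_(s < k | r != s) (x r - x s)).

Definition RHSa (k : nat) (P : {mpoly CC[k]}) (n : nat) : Atil :=
  fun e => \sum_(J : {set 'I_a} | #|J| == k)
    (if e == [ffun r => - (((r \in J) : nat)%:Z)] then
       (\prod_(r in J) \prod_(s in ~: J) ((wK r - cK q2^-1 * wK s) / (wK r - wK s))) *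
       (\prod_(r in J) Zf (wK r)) *
       gval P n (fun i => nth 0 [seq wK r | r <- enum J] i)
     else 0).

Definition RHSb (k : nat) (P : {mpoly CC[k]}) (n : nat) : Atil :=
  fun e => \sum_(J : {set 'I_a} | #|J| == k)
    (if e == [ffun r => ((r \in J) : nat)%:Z] then
       (\prod_(r in J) \prod_(s in ~: J) ((wK r - cK q2 * wK s) / (wK r - wK s))) *
       gval P n (fun i => nth 0 [seq cK q1 * wK r | r <- enum J] i)
     else 0).

End Lemma37Defs.

Definition not_root_of_unity (q : CC) : Prop := forall d : nat, (0 < d)%N -> q ^+ d != 1.

(* If some m_r >= 2, the evaluation points of Phi^> contain both w_r and
   q1^-1 w_r (those of Phi^<: q1 w_r and q1^2 w_r), which kill the factor
   prod_{r <> s} (x_r - q1^-1 x_s) of E~_k(g) (resp. F~_k(g)).  So only the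
   m = 1_J with |J| = k survive, evaluated at the distinct points w_r
   (resp. q1 w_r), r in J.  There the factors of Y_r (resp. Y'_r) indexed by
   s notin J are the cross terms of the right-hand side, while for each ordered
   pair r <> s in J the factor indexed by s, the ratio
   (x_r - q1^-1 x_s) / (x_r - x_s) of E~_k and phi^-1 multiply to
   (q1 q2)^-1/2 (in case (b), after exchanging r and s in the ratio of F~_k:
   q2 (q1 q2)^-1/2).  The resulting power of this constant cancels the
   normalisations of Y, Y', E~_k and F~_k, using q1 q2 q3 = 1. *)

From Pilot Require Import Defs.
From HB Require Import structures.
From mathcomp Require Import all_boot all_algebra fraction.
From mathcomp Require Import mpoly.
From mathcomp Require Import ring.
From Stdlib Require Import FunctionalExtensionality.
Set Implicit Arguments.
Unset Strict Implicit.
Unset Printing Implicit Defensive.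

Import GRing.Theory Num.Theory.
Local Open Scope ring_scope.

Section OffDiagonalProducts.
Variables (R : comNzRingType) (I : finType).

Lemma prod_offdiag_eq0 (x : I -> R) c i j :
  i != j -> x i = c * x j -> \prod_r \prod_(s | r != s) (x r - c * x s) = 0.
Proof.
move=> neq_ij xiE.
by rewrite (bigD1 i) //= (bigD1 j) //= xiE subrr !mul0r.
Qed.

Lemma prod_offdiag_swap (J : {set I}) (f : I -> I -> R) :
  \prod_(r in J) \prod_(s in J | r != s) f r s
  = \prod_(r in J) \prod_(s in J | r != s) f s r.
Proof.
rewrite (exchange_big_dep (mem J)) /=; last by move=> r s _ /andP[].
apply: eq_bigr => s sJ; apply: eq_bigl => r.
by rewrite sJ eq_sym.
Qed.

Lemma prod_offdiag_const (J : {set I}) (c : R) :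
  \prod_(r in J) \prod_(s in J | r != s) c = c ^+ (#|J| * #|J|.-1).
Proof.
rewrite mulnC exprM -prodr_const; apply: eq_bigr => r rJ.
rewrite (cardsD1 r J) rJ /= -prodr_const.
by apply: eq_bigl => s; rewrite in_setD1 andbC eq_sym.
Qed.

Lemma prod_offdiag_split (J : {set I}) (f g : I -> I -> R) :
  \prod_(r in J) \prod_(s in J | r != s) (f r s * g r s)
  = \prod_(r in J) \prod_(s in J | r != s) f r s
    * \prod_(r in J) \prod_(s in J | r != s) g r s.
Proof. by rewrite -big_split; apply: eq_bigr => r _; rewrite big_split. Qed.

Lemma prod_neq_split (J : {set I}) (f : I -> R) r : r \in J ->
  \prod_(s | s != r) f s = \prod_(s in ~: J) f s * \prod_(s in J | r != s) f s.
Proof.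
move=> rJ; rewrite (bigID (mem J)) [RHS]mulrC /=; congr (_ * _).
  by apply: eq_bigl => s; rewrite andbC eq_sym.
apply: eq_bigl => s; rewrite in_setC andbC.
by case: (boolP (s \in J)) => //= sJ; apply/eqP=> sr; rewrite sr rJ in sJ.
Qed.

Lemma prod_offdiag_enum (J : {set I}) k (h : R -> R -> R) (f : I -> R) : #|J| = k ->
  \prod_(i < k) \prod_(j < k | i != j)
     h (nth 0 [seq f r | r <- enum J] i) (nth 0 [seq f r | r <- enum J] j)
  = \prod_(r in J) \prod_(s in J | r != s) h (f r) (f s).
Proof.
move=> <-; case: (set_0Vmem J) => [->|[r0 _]].
  by rewrite cards0 !big_ord0 big_pred0 // => r; rewrite in_set0.
have size_J : size (enum J) = #|J| by rewrite -cardE.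
rewrite -[RHS]big_enum [RHS](big_nth r0) size_J big_mkord.
apply: eq_bigr => i _.
rewrite -[RHS]big_enum_cond [RHS](big_nth r0) size_J big_mkord.
apply: eq_big => [j|j _]; first by rewrite nth_uniq ?size_J ?enum_uniq.
by rewrite !(nth_map r0) ?size_J.
Qed.

End OffDiagonalProducts.

Lemma prod_offdiag_div (F : fieldType) (I : finType) (J : {set I}) (f g : I -> I -> F) :
  \prod_(r in J) \prod_(s in J | r != s) (f r s / g r s)
  = (\prod_(r in J) \prod_(s in J | r != s) f r s)
    / \prod_(r in J) \prod_(s in J | r != s) g r s.
Proof.
rewrite prod_offdiag_split -prodfV; congr (_ * _).
by apply: eq_bigr => r _; rewrite prodfV.
Qed.

Section IndicatorProducts.
Variables (R : comNzRingType) (I : finType) (J : {set I}).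

Lemma prod_ord_indicator (F : I -> nat -> R) :
  \prod_r \prod_(p < (r \in J)) F r p = \prod_(r in J) F r 0.
Proof.
rewrite [RHS]big_mkcond; apply: eq_bigr => r _.
by case: (r \in J); rewrite ?big_ord1 ?big_ord0.
Qed.

Lemma prod_ord_indicator_lt (F : I -> nat -> nat -> R) :
  \prod_r \prod_(p1 < (r \in J)) \prod_(p2 < (r \in J) | (p1 < p2)%N) F r p1 p2 = 1.
Proof.
apply: big1 => r _; apply: big1 => p1 _; apply: big_pred0 => p2.
have : (p2 < 1)%N := leq_trans (ltn_ord p2) (leq_b1 _).
by rewrite ltnS leqn0 => /eqP->.
Qed.

Lemma prod_offdiag_indicator (F : I -> I -> nat -> nat -> R) :
  \prod_r1 \prod_(r2 | r1 != r2) \prod_(p1 < (r1 \in J)) \prod_(p2 < (r2 \in J)) F r1 r2 p1 p2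
  = \prod_(r1 in J) \prod_(r2 in J | r1 != r2) F r1 r2 0 0.
Proof.
rewrite [RHS]big_mkcond; apply: eq_bigr => r1 _.
case: (r1 \in J); last by apply: big1 => r2 _; rewrite big_ord0.
rewrite [RHS]big_mkcondl; apply: eq_bigr => r2 _.
by rewrite big_ord1; case: (r2 \in J); rewrite ?big_ord1 ?big_ord0.
Qed.

End IndicatorProducts.

Section FlattenIota.
Variables (I : eqType) (T : Type) (f : I -> nat -> T) (b : nat).

Lemma size_flatten_iota (m : I -> nat) s :
  size (flatten [seq [seq f r p | p <- iota b (m r)] | r <- s]) = (\sum_(r <- s) m r)%N.
Proof.
by elim: s => [|r s IHs] /=; rewrite ?big_nil ?big_cons // size_cat size_map size_iota IHs.
Qed.

Lemma flatten_iota_indicator (A : pred I) s :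
  flatten [seq [seq f r p | p <- iota b (A r)] | r <- s] = [seq f r b | r <- s & A r].
Proof. by elim: s => //= r s ->; case: (A r). Qed.

Lemma nth_flatten_iota_adjacent (x0 : T) (m : I -> nat) s r0 :
  r0 \in s -> (1 < m r0)%N ->
  let L := flatten [seq [seq f r p | p <- iota b (m r)] | r <- s] in
  exists2 i, (i.+1 < size L)%N & nth x0 L i = f r0 b /\ nth x0 L i.+1 = f r0 b.+1.
Proof.
case/splitPr=> s1 s2; case m_r0: (m r0) => [|[|l]] // _.
rewrite map_cat flatten_cat /= m_r0 /=.
set L1 := flatten _; exists (size L1).
  by rewrite size_cat /= !addnS !ltnS leq_addr.
by rewrite !nth_cat ltnn subnn ltnNge leqnSn subSnn.
Qed.

End FlattenIota.

Lemma sum_compositions_subsets (V : nmodType) (I : finType) k (T : (I -> nat) -> V) :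
  (0 < k)%N -> (forall m r, (\sum_i m i)%N = k -> (1 < m r)%N -> T m = 0) ->
  \sum_(m : {ffun I -> 'I_k.+1} | (\sum_i m i == k)%N) T (fun i => m i)
  = \sum_(J : {set I} | #|J| == k) T (fun i => i \in J).
Proof.
move=> k_gt0 T_eq0.
pose ind (J : {set I}) : {ffun I -> 'I_k.+1} := [ffun i => inord (i \in J)].
have indE J i : (ind J i : nat) = (i \in J) by rewrite ffunE inordK // ltnS; case: (i \in J).
rewrite (bigID (fun m : {ffun I -> 'I_k.+1} => [forall i, m i <= 1]%N)) /=.
rewrite [X in _ + X]big1 ?addr0; last first.
  move=> m /andP[/eqP sum_m]; rewrite negb_forall => /existsP[r].
  by rewrite -ltnNge; apply: T_eq0.
rewrite (reindex_onto ind (fun m => [set i | m i != 0 :> nat])); last first.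
  move=> m /andP[_ /forallP m_le1]; apply/ffunP => i; apply: val_inj.
  by rewrite /= indE inE; case: (m i) (m_le1 i) => [[|[|]]].
apply: eq_big => [J|J _].
  have -> : (\sum_i ind J i)%N = #|J|.
    by rewrite -sum1_card [RHS]big_mkcond; apply: eq_bigr => i _; rewrite indE.
  have -> : [set i | ind J i != 0 :> nat] = J by apply/setP => i; rewrite inE indE; case: (i \in J).
  rewrite eqxx andbT; case: (#|J| == k) => //=.
  by apply/forallP => i; rewrite indE; case: (i \in J).
by congr T; apply: functional_extensionality => i; rewrite indE.
Qed.

Lemma expr_offdiag (R : pzRingType) (c : R) k : c ^+ (k * k.-1) = (c ^+ 2) ^+ 'C(k, 2).
Proof. by rewrite -exprM -mul_bin_diag bin1. Qed.

Section PairFactors.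
Variables (F : fieldType) (s1 s2 u v : F).
Hypotheses (s1_neq0 : s1 != 0) (s2_neq0 : s2 != 0) (uv_neq0 : u - v != 0).

Let phi x := (s1 * x - s1^-1) * (s2 * x - s2^-1) / (x - 1) ^+ 2.

Lemma pair_factor_gt : v != 0 -> s1 ^+ 2 * u - v != 0 -> s2 ^+ 2 * u - v != 0 ->
  (u - v * (s2 ^+ 2)^-1) / (u - v) * ((u - (s1 ^+ 2)^-1 * v) / (u - v)) / phi (u / v)
  = (s1 * s2)^-1.
Proof.
move=> v_neq0 s1uv_neq0 s2uv_neq0; rewrite /phi; field.
by rewrite !mulN1r !(mulrAC _ u) -!expr2 s1_neq0 s2_neq0 v_neq0 uv_neq0 s1uv_neq0 s2uv_neq0.
Qed.

Lemma pair_factor_lt : u != 0 -> s1 ^+ 2 * v - u != 0 -> s2 ^+ 2 * v - u != 0 ->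
  (u - v * s2 ^+ 2) / (u - v)
  * ((s1 ^+ 2 * v - (s1 ^+ 2)^-1 * (s1 ^+ 2 * u)) / (s1 ^+ 2 * v - s1 ^+ 2 * u))
  / phi ((v * s1 ^+ 2) / (u * s1 ^+ 2))
  = s2 / s1.
Proof.
move=> u_neq0 s1vu_neq0 s2vu_neq0; have vu_neq0 : v - u != 0 by rewrite -opprB oppr_eq0.
have s1_vu_neq0 : s1 ^+ 2 * v - s1 ^+ 2 * u != 0 by rewrite -mulrBr mulf_neq0 ?expf_neq0.
rewrite /phi; field.
by rewrite !mulN1r !(mulrAC _ v) -!expr2 s1_neq0 s2_neq0 u_neq0 uv_neq0 vu_neq0
  s1vu_neq0 s2vu_neq0 s1_vu_neq0.
Qed.

End PairFactors.

Section Normalisations.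
Variables (F : fieldType) (q1 q2 q3 s1 s2 : F) (k : nat).
Hypotheses (s1E : s1 ^+ 2 = q1) (s2E : s2 ^+ 2 = q2) (q1_neq1 : q1 != 1).

Lemma normalisation_gt : q1 * q2 * q3 = 1 ->
  (-1 / (1 - q1^-1)) ^+ k * ((q3 ^+ 'C(k, 2))^-1 * (q1^-1 - 1) ^+ k)
  * (s1 * s2)^-1 ^+ (k * k.-1) = 1.
Proof.
move=> q123; have /andP[q12_neq0 q3_neq0] : (q1 * q2 != 0) && (q3 != 0).
  by rewrite -negb_or -mulf_eq0 q123 oner_eq0.
have pairE : (s1 * s2)^-1 ^+ 2 = q3
  by rewrite exprVn exprMn s1E s2E; apply: (mulfI q12_neq0); rewrite mulfV // mulrA q123.
have unitE : -1 / (1 - q1^-1) * (q1^-1 - 1) = 1.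
  by rewrite -[q1^-1 - 1]opprB mulN1r mulrNN mulVf // subr_eq0 eq_sym invr_eq1.
by rewrite expr_offdiag pairE mulrCA -exprMn unitE expr1n mulr1 mulVf // expf_neq0.
Qed.

Lemma normalisation_lt : q1 != 0 -> q2 != 0 ->
  (1 / (1 - q1)) ^+ k * (((q2 / q1) ^+ 'C(k, 2))^-1 * (1 - q1) ^+ k)
  * (s2 / s1) ^+ (k * k.-1) = 1.
Proof.
move=> q1_neq0 q2_neq0; have q21_neq0 : q2 / q1 != 0 by rewrite mulf_neq0 ?invr_eq0.
have unitE : 1 / (1 - q1) * (1 - q1) = 1 by rewrite mul1r mulVf // subr_eq0 eq_sym.
rewrite expr_offdiag [(s2 / s1) ^+ 2]expr_div_n s1E s2E mulrCA -exprMn unitE expr1n mulr1.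
by rewrite mulVf // expf_neq0.
Qed.

End Normalisations.

HB.instance Definition _ (a : nat) := GRing.RMorphism.copy (@cK a) (@tofrac _ \o @mpolyC a CC).

Section PhiTilde.
Variables (a N : nat) (zs : 'I_N -> CC) (q1 q2 q3 sq1 sq2 : CC).
Variables (k : nat) (P : {mpoly CC[k]}) (n : nat).
Hypotheses (k_gt0 : (0 < k)%N) (q1_neq0 : q1 != 0) (q2_neq0 : q2 != 0) (q1_neq1 : q1 != 1).
Hypotheses (q123 : q1 * q2 * q3 = 1) (sq1E : sq1 ^+ 2 = q1) (sq2E : sq2 ^+ 2 = q2).

Local Notation K := (Kf a).
Local Notation cK := (@cK a).
Local Notation wK := (@wK a).
Local Notation coefG := (@coefG a N zs q1 q2 q3 sq1 sq2 k).
Local Notation coefL := (@coefL a q1 q2 q3 sq1 sq2 k).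
Local Notation Etil := (@Etil a q1 q3 k P n).
Local Notation Ftil := (@Ftil a q1 q2 k P n).
Local Notation ptsG := (@ptsG a q1).
Local Notation ptsL := (@ptsL a q1).
Local Notation Yf := (@Yf a N zs q1 q2).
Local Notation Ypf := (@Ypf a q1 q2).
Local Notation Zf := (@Zf a N zs).
Local Notation phif := (@phif a sq1 sq2).
Local Notation gval := (@gval a k P n).

(* Restated for [cK]: the generic morphism lemmas would leave its structure
   projection in the goal, which later matching can only unfold at great cost. *)
Lemma cK1 : cK 1 = 1.
Proof. exact: rmorph1. Qed.

Lemma cKM x y : cK (x * y) = cK x * cK y.
Proof. exact: rmorphM. Qed.

Lemma cKV x : cK x^-1 = (cK x)^-1.
Proof. exact: fmorphV. Qed.

Lemma cKX x m : cK (x ^+ m) = cK x ^+ m.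
Proof. exact: rmorphXn. Qed.

Lemma cK_eq0 x : (cK x == 0) = (x == 0).
Proof. exact: fmorph_eq0. Qed.

Lemma wK_sub_scaled_neq0 r s c : r != s -> c != 0 -> cK c * wK r - wK s != 0.
Proof.
move=> neq_rs c_neq0; rewrite /Defs.cK /Defs.wK -tofracM -tofracB tofrac_eq0.
apply/eqP => /(congr1 (mcoeff U_(r))).
by rewrite mcoeffB mcoeffCM !mcoeffXU eqxx eq_sym (negbTE neq_rs) mulr1 subr0 mcoeff0; apply/eqP.
Qed.

Lemma wK_sub_neq0 r s : r != s -> wK r - wK s != 0.
Proof.
by move=> neq_rs; have := @wK_sub_scaled_neq0 r s 1 neq_rs (oner_neq0 _); rewrite cK1 mul1r.
Qed.

Lemma wK_neq0 r : wK r != 0.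
Proof.
rewrite /Defs.wK tofrac_eq0; apply/eqP => /(congr1 (mcoeff U_(r))).
by rewrite mcoeffXU mcoeff0 eqxx; apply/eqP; rewrite oner_eq0.
Qed.

Lemma size_ptsG m : size (ptsG m) = (\sum_r m r)%N.
Proof. by rewrite size_flatten_iota big_enum. Qed.

Lemma size_ptsL m : size (ptsL m) = (\sum_r m r)%N.
Proof. by rewrite size_flatten_iota big_enum. Qed.

Lemma ptsG_indicator (J : {set 'I_a}) : ptsG (fun r => r \in J) = [seq wK r | r <- enum J].
Proof.
rewrite /Defs.ptsG flatten_iota_indicator enumT.
by apply: eq_map => r; rewrite expr0 invr1 cK1 mulr1.
Qed.

Lemma ptsL_indicator (J : {set 'I_a}) : ptsL (fun r => r \in J) = [seq cK q1 * wK r | r <- enum J].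
Proof.
by rewrite /Defs.ptsL flatten_iota_indicator enumT; apply: eq_map => r; rewrite mulrC.
Qed.

Let mem_enum_ord r : r \in enum 'I_a. Proof. by rewrite mem_enum. Qed.

Lemma ptsG_adjacent m r0 : (1 < m r0)%N ->
  exists2 i, (i.+1 < size (ptsG m))%N & nth 0 (ptsG m) i.+1 = cK q1^-1 * nth 0 (ptsG m) i.
Proof.
move=> m_r0; rewrite /Defs.ptsG; have [i lt_i [xiE xi1E]] := nth_flatten_iota_adjacent
  (fun r p => wK r * cK (q1 ^- p)) 0 0 (mem_enum_ord r0) m_r0.
exists i => //; rewrite xiE xi1E.
by rewrite expr0 expr1 invr1 cK1 mulr1 mulrC.
Qed.

Lemma ptsL_adjacent m r0 : (1 < m r0)%N ->
  exists2 i, (i.+1 < size (ptsL m))%N & nth 0 (ptsL m) i = cK q1^-1 * nth 0 (ptsL m) i.+1.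
Proof.
move=> m_r0; rewrite /Defs.ptsL; have [i lt_i [xiE xi1E]] := nth_flatten_iota_adjacent
  (fun r p => wK r * cK (q1 ^+ p)) 1 0 (mem_enum_ord r0) m_r0.
exists i => //; rewrite xiE xi1E.
by rewrite [RHS]mulrCA -cKM [q1 ^+ 2]exprS mulKf.
Qed.

Lemma Etil_eq0 (x : 'I_k -> K) (i j : 'I_k) : i != j -> x i = cK q1^-1 * x j -> Etil x = 0.
Proof. by move=> neq_ij xiE; rewrite /Defs.Etil (prod_offdiag_eq0 neq_ij xiE) mulr0 !mul0r. Qed.

Lemma Ftil_eq0 (x : 'I_k -> K) (i j : 'I_k) : i != j -> x i = cK q1^-1 * x j -> Ftil x = 0.
Proof. by move=> neq_ij xiE; rewrite /Defs.Ftil (prod_offdiag_eq0 neq_ij xiE) mulr0 !mul0r. Qed.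

Lemma coefG_Etil_eq0 m r0 : (\sum_r m r)%N = k -> (1 < m r0)%N -> coefG Etil m = 0.
Proof.
move=> sum_m m_r0; have [i lt_i nthE] := ptsG_adjacent m_r0.
rewrite size_ptsG sum_m in lt_i.
rewrite /Defs.coefG (@Etil_eq0 _ (Ordinal lt_i) (Ordinal (ltnW lt_i))) ?mulr0 ?mul0r //.
by rewrite -val_eqE /= (gtn_eqF (ltnSn i)).
Qed.

Lemma coefL_Ftil_eq0 m r0 : (\sum_r m r)%N = k -> (1 < m r0)%N -> coefL Ftil m = 0.
Proof.
move=> sum_m m_r0; have [i lt_i nthE] := ptsL_adjacent m_r0.
rewrite size_ptsL sum_m in lt_i.
rewrite /Defs.coefL (@Ftil_eq0 _ (Ordinal (ltnW lt_i)) (Ordinal lt_i)) ?mulr0 ?mul0r //.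
by rewrite -val_eqE /= (ltn_eqF (ltnSn i)).
Qed.

Lemma coefG_indicator E (J : {set 'I_a}) :
  coefG E (fun r => r \in J)
  = (\prod_(r in J) Yf r (wK r)) * E (fun i => nth 0 [seq wK r | r <- enum J] i)
    * \prod_(r in J) \prod_(s in J | r != s) (phif (wK r / wK s))^-1.
Proof.
rewrite /Defs.coefG /= ptsG_indicator.
rewrite (prod_ord_indicator J (fun r p => Yf r (wK r * cK (q1 ^- p)))).
rewrite (prod_ord_indicator_lt J (fun r p1 p2 =>
  (zetaf q1 q2 q3 (wK r * cK (q1 ^- p1) / (wK r * cK (q1 ^- p2))))^-1)).
rewrite (prod_offdiag_indicator J (fun r1 r2 p1 p2 =>
  (phif (wK r1 * cK (q1 ^- p1) / (wK r2 * cK (q1 ^- p2))))^-1)).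
have x0E r : wK r * cK (q1 ^- 0) = wK r by rewrite expr0 invr1 cK1 mulr1.
rewrite mulr1; congr (_ * _ * _); first by apply: eq_bigr => r _; rewrite x0E.
by apply: eq_bigr => r _; apply: eq_bigr => s _; rewrite !x0E.
Qed.

Lemma coefL_indicator E (J : {set 'I_a}) :
  coefL E (fun r => r \in J)
  = (\prod_(r in J) Ypf r (wK r * cK q1))
    * E (fun i => nth 0 [seq cK q1 * wK r | r <- enum J] i)
    * \prod_(r in J) \prod_(s in J | r != s) (phif ((wK s * cK q1) / (wK r * cK q1)))^-1.
Proof.
rewrite /Defs.coefL /= ptsL_indicator.
rewrite (prod_ord_indicator J (fun r p => Ypf r (wK r * cK (q1 ^+ p.+1)))).
rewrite (prod_ord_indicator_lt J (fun r p1 p2 =>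
  (zetaf q1 q2 q3 (wK r * cK (q1 ^+ p2.+1) / (wK r * cK (q1 ^+ p1.+1))))^-1)).
rewrite (prod_offdiag_indicator J (fun r1 r2 p1 p2 =>
  (phif (wK r2 * cK (q1 ^+ p2.+1) / (wK r1 * cK (q1 ^+ p1.+1))))^-1)).
by rewrite mulr1 expr1.
Qed.

Lemma prod_Yf_indicator (J : {set 'I_a}) :
  \prod_(r in J) Yf r (wK r)
  = cK (-1 / (1 - q1^-1)) ^+ #|J| * \prod_(r in J) Zf (wK r)
    * \prod_(r in J) \prod_(s in ~: J) ((wK r - cK q2^-1 * wK s) / (wK r - wK s))
    * \prod_(r in J) \prod_(s in J | r != s) ((wK r - wK s * cK q2^-1) / (wK r - wK s)).
Proof.
rewrite /Defs.Yf !big_split prodr_const /= -[RHS]mulrA -big_split; congr (_ * _).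
apply: eq_bigr => r rJ; rewrite (prod_neq_split _ rJ); congr (_ * _).
by apply: eq_bigr => s _; rewrite (mulrC (wK s)).
Qed.

Lemma prod_Ypf_indicator (J : {set 'I_a}) :
  \prod_(r in J) Ypf r (wK r * cK q1)
  = cK (1 / (1 - q1)) ^+ #|J|
    * \prod_(r in J) \prod_(s in ~: J) ((wK r - cK q2 * wK s) / (wK r - wK s))
    * \prod_(r in J) \prod_(s in J | r != s) ((wK r - wK s * cK q2) / (wK r - wK s)).
Proof.
have cq1_neq0 : cK q1 != 0 by rewrite cK_eq0.
rewrite /Defs.Ypf big_split prodr_const /= -mulrA -big_split; congr (_ * _).
apply: eq_bigr => r rJ; rewrite cKV mulfK // (prod_neq_split _ rJ); congr (_ * _).
by apply: eq_bigr => s _; rewrite (mulrC (wK s)).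
Qed.

Lemma Etil_enum (J : {set 'I_a}) (f : 'I_a -> K) : #|J| = k ->
  Etil (fun i => nth 0 [seq f r | r <- enum J] i)
  = cK ((q3 ^+ 'C(k, 2))^-1 * (q1^-1 - 1) ^+ k)
    * \prod_(r in J) \prod_(s in J | r != s) ((f r - cK q1^-1 * f s) / (f r - f s))
    * gval (fun i => nth 0 [seq f r | r <- enum J] i).
Proof.
move=> cardJ; rewrite /Defs.Etil; set g := gval _.
rewrite (prod_offdiag_enum (fun y z => y - cK q1^-1 * z)) //.
by rewrite (prod_offdiag_enum (fun y z => y - z)) // prod_offdiag_div mulrAC (mulrA (cK _)).
Qed.

Lemma Ftil_enum (J : {set 'I_a}) (f : 'I_a -> K) : #|J| = k ->
  Ftil (fun i => nth 0 [seq f r | r <- enum J] i)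
  = cK (((q2 / q1) ^+ 'C(k, 2))^-1 * (1 - q1) ^+ k)
    * \prod_(r in J) \prod_(s in J | r != s) ((f r - cK q1^-1 * f s) / (f r - f s))
    * gval (fun i => nth 0 [seq f r | r <- enum J] i).
Proof.
move=> cardJ; rewrite /Defs.Ftil; set g := gval _.
rewrite (prod_offdiag_enum (fun y z => y - cK q1^-1 * z)) //.
by rewrite (prod_offdiag_enum (fun y z => y - z)) // prod_offdiag_div mulrAC (mulrA (cK _)).
Qed.

Let csq1_neq0 : cK sq1 != 0.
Proof. by rewrite cK_eq0; apply: contraNneq q1_neq0 => sq1_0; rewrite -sq1E sq1_0 expr0n. Qed.

Let csq2_neq0 : cK sq2 != 0.
Proof. by rewrite cK_eq0; apply: contraNneq q2_neq0 => sq2_0; rewrite -sq2E sq2_0 expr0n. Qed.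

Let csq_sub_neq0 sq q r s : sq ^+ 2 = q -> q != 0 -> r != s -> cK sq ^+ 2 * wK r - wK s != 0.
Proof. by move=> sqE q_neq0 neq_rs; rewrite -cKX sqE wK_sub_scaled_neq0. Qed.

Lemma prod_pair_factors_gt (J : {set 'I_a}) :
  (\prod_(r in J) \prod_(s in J | r != s) ((wK r - wK s * cK q2^-1) / (wK r - wK s)))
  * (\prod_(r in J) \prod_(s in J | r != s) ((wK r - cK q1^-1 * wK s) / (wK r - wK s)))
  * (\prod_(r in J) \prod_(s in J | r != s) (phif (wK r / wK s))^-1)
  = cK ((sq1 * sq2)^-1) ^+ (#|J| * #|J|.-1).
Proof.
rewrite -!prod_offdiag_split -prod_offdiag_const.
apply: eq_bigr => r _; apply: eq_bigr => s /andP[_ neq_rs].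
rewrite /Defs.phif -sq1E -sq2E !(cKV, cKX, cKM).
exact: (pair_factor_gt csq1_neq0 csq2_neq0 (wK_sub_neq0 neq_rs) (wK_neq0 s)
  (csq_sub_neq0 sq1E q1_neq0 neq_rs) (csq_sub_neq0 sq2E q2_neq0 neq_rs)).
Qed.

Lemma prod_pair_factors_lt (J : {set 'I_a}) :
  (\prod_(r in J) \prod_(s in J | r != s) ((wK r - wK s * cK q2) / (wK r - wK s)))
  * (\prod_(r in J) \prod_(s in J | r != s)
       ((cK q1 * wK r - cK q1^-1 * (cK q1 * wK s)) / (cK q1 * wK r - cK q1 * wK s)))
  * (\prod_(r in J) \prod_(s in J | r != s) (phif ((wK s * cK q1) / (wK r * cK q1)))^-1)
  = cK (sq2 / sq1) ^+ (#|J| * #|J|.-1).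
Proof.
rewrite [X in _ * X * _]prod_offdiag_swap -!prod_offdiag_split -prod_offdiag_const.
apply: eq_bigr => r _; apply: eq_bigr => s /andP[_ neq_rs].
rewrite /Defs.phif -sq1E -sq2E !(cKV, cKX, cKM).
have neq_sr : s != r by rewrite eq_sym.
exact: (pair_factor_lt csq1_neq0 csq2_neq0 (wK_sub_neq0 neq_rs) (wK_neq0 r)
  (csq_sub_neq0 sq1E q1_neq0 neq_sr) (csq_sub_neq0 sq2E q2_neq0 neq_sr)).
Qed.

Lemma coefG_Etil_indicator (J : {set 'I_a}) : #|J| = k ->
  coefG Etil (fun r => r \in J)
  = (\prod_(r in J) \prod_(s in ~: J) ((wK r - cK q2^-1 * wK s) / (wK r - wK s)))
    * (\prod_(r in J) Zf (wK r)) * gval (fun i => nth 0 [seq wK r | r <- enum J] i).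
Proof.
move=> cardJ; have := prod_pair_factors_gt J; rewrite cardJ => pairsE.
have := congr1 cK (normalisation_gt k sq1E sq2E q1_neq1 q123).
rewrite cK1 2!cKM 2!cKX -pairsE => normE.
rewrite coefG_indicator prod_Yf_indicator Etil_enum // cardJ.
(* [{1}] selects the new leading factor [1], not the units of the products *)
by apply/esym; rewrite -[LHS]mul1r -{1}normE; ring.
Qed.

Lemma coefL_Ftil_indicator (J : {set 'I_a}) : #|J| = k ->
  coefL Ftil (fun r => r \in J)
  = (\prod_(r in J) \prod_(s in ~: J) ((wK r - cK q2 * wK s) / (wK r - wK s)))
    * gval (fun i => nth 0 [seq cK q1 * wK r | r <- enum J] i).
Proof.
move=> cardJ; have := prod_pair_factors_lt J; rewrite cardJ => pairsE.
have := congr1 cK (normalisation_lt k sq1E sq2E q1_neq1 q1_neq0 q2_neq0).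
rewrite cK1 2!cKM 2!cKX -pairsE => normE.
rewrite coefL_indicator prod_Ypf_indicator Ftil_enum // cardJ.
by apply/esym; rewrite -[LHS]mul1r -{1}normE; ring.
Qed.

Lemma Phi_gt_Etil e :
  Phi_gt zs q1 q2 q3 sq1 sq2 Etil e
  = \sum_(J : {set 'I_a} | #|J| == k)
      if e == [ffun r => - ((r \in J) : nat)%:Z] then coefG Etil (fun r => r \in J) else 0.
Proof.
rewrite /Defs.Phi_gt (@sum_compositions_subsets _ _ _
  (fun m => if e == [ffun r => - (m r)%:Z] then coefG Etil m else 0)) // => m r0 sum_m m_r0.
by rewrite (coefG_Etil_eq0 sum_m m_r0) if_same.
Qed.

Lemma Phi_lt_Ftil e :
  Phi_lt q1 q2 q3 sq1 sq2 Ftil e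
  = \sum_(J : {set 'I_a} | #|J| == k)
      if e == [ffun r => ((r \in J) : nat)%:Z] then coefL Ftil (fun r => r \in J) else 0.
Proof.
rewrite /Defs.Phi_lt (@sum_compositions_subsets _ _ _
  (fun m => if e == [ffun r => (m r)%:Z] then coefL Ftil m else 0)) // => m r0 sum_m m_r0.
by rewrite (coefL_Ftil_eq0 sum_m m_r0) if_same.
Qed.

End PhiTilde.

Theorem lemma3p7 (a N : nat) (zs : 'I_N -> CC) (q1 q2 q3 sq1 sq2 : CC)
    (k : nat) (P : {mpoly CC[k]}) (n : nat) :
  (1 <= a)%N -> (1 <= k)%N ->
  (forall j, zs j != 0) ->
  q1 != 0 -> q2 != 0 -> q3 != 0 ->
  not_root_of_unity q1 -> not_root_of_unity q2 -> not_root_of_unity q3 ->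
  q1 * q2 * q3 = 1 -> sq1 ^+ 2 = q1 -> sq2 ^+ 2 = q2 ->
  P \is symmetric ->
  @Phi_gt a N zs q1 q2 q3 sq1 sq2 k (@Etil a q1 q3 k P n)
    = @RHSa a N zs q2 k P n /\
  @Phi_lt a q1 q2 q3 sq1 sq2 k (@Ftil a q1 q2 k P n)
    = @RHSb a q1 q2 k P n.
Proof.
(* g need not be symmetric, and of the root-of-unity conditions only q1 <> 1 is used *)
move=> _ k_gt0 _ q1_neq0 q2_neq0 _ q1_nru _ _ q123 sq1E sq2E _.
have q1_neq1 : q1 != 1 by have := q1_nru 1%N isT; rewrite expr1.
split; apply: functional_extensionality => e.
  rewrite Phi_gt_Etil //; apply: eq_bigr => J /eqP cardJ.
  by rewrite coefG_Etil_indicator.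
rewrite Phi_lt_Ftil //; apply: eq_bigr => J /eqP cardJ.
by rewrite coefL_Ftil_indicator.
Qed.
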